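(* For each choice $\lambda\in\{1,\,2,\,\frac{|V(\mathcal{B})|}{4}\}$, there are infinitely many balanced bipartite graphs $\mathcal{B}$ (with parts $V_1,V_2$, $|V_1|=|V_2|=n=\frac{|V(\mathcal{B})|}{2}$) such that: (i) $\delta(\mathcal{B})\geq \frac{|V(\mathcal{B})|}{4}+1$; and (ii) there exists a subset $S\subseteq V(\mathcal{B})$ with $|S|=\frac{|V(\mathcal{B})|}{2}+1$ such that $\mathcal{B}[S]$ is a forest and $|S\cap V_i|=\lambda$ for some $i\in\{1,2\}$.
   Context: All graphs are finite and simple. A balanced bipartite graph on $2n$ vertices is a bipartite graph with a given bipartition $(V_1,V_2)$ where $|V_1|=|V_2|=n$. $\delta(G)$ denotes the minimum degree of $G$, and $G[S]$ the subgraph induced by $S\subseteq V(G)$. *)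

From mathcomp Require Import all_boot.
Set Implicit Arguments. Unset Strict Implicit. Unset Printing Implicit Defensive.

(* Balanced bipartite graph on 2n vertices: vertex set 'I_n + 'I_n,
   V_1 = left copies (inl), V_2 = right copies (inr). *)
Definition bvert (n : nat) : finType := ('I_n + 'I_n)%type.

Definition in_V1 (n : nat) (v : bvert n) : bool :=
  if v is inl _ then true else false.

Definition part (n : nat) (i : bool) : {set bvert n} :=
  [set v | in_V1 v == i].

Definition bip_graph (n : nat) (e : rel (bvert n)) : Prop :=
  symmetric e /\ irreflexive e /\ (forall x y, e x y -> in_V1 x != in_V1 y).

Definition deg (n : nat) (e : rel (bvert n)) (v : bvert n) : nat :=
  #|[set u | e v u]|.

Definition induced_forest (n : nat) (e : rel (bvert n)) (S : {set bvert n}) : Prop :=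
  ~ exists c : seq (bvert n),
      [/\ uniq c, 2 < size c, all (fun v => v \in S) c & cycle e c].

Inductive lam_choice := Lam1 | Lam2 | LamQuarter.

Definition lam_ok (c : lam_choice) (N k : nat) : Prop :=
  match c with
  | Lam1 => k = 1
  | Lam2 => k = 2
  | LamQuarter => 4 * k = N
  end.

From mathcomp Require Import all_boot zify.

Set Implicit Arguments.
Unset Strict Implicit.
Unset Printing Implicit Defensive.

(* Each S is shown to induce a forest by a
   ranking of its vertices under which every vertex has at most one
   neighbour in S of no larger rank: the vertex of maximal rank on a cycle
   would have two. For lambda = 1 take K_{n,n} and S = one vertex of V_1
   together with V_2, which induces a star. *)

Lemma count_iota_lt n k : k <= n -> count (fun j => j < k) (iota 0 n) = k.
Proof. by move=> kn; rewrite -size_filter (filter_iota_ltn 0 kn) size_iota. Qed.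

Lemma count_iota_neq n m : m < n -> count (fun j => j != m) (iota 0 n) = n.-1.
Proof.
move=> mn; have := count_predC (pred1 m) (iota 0 n).
rewrite size_iota count_uniq_mem ?iota_uniq // mem_iota mn add1n => def_n.
by rewrite -[in RHS]def_n.
Qed.

Lemma leq_count_iota (P : pred nat) s t a k :
  s <= a -> a + k <= s + t -> (forall j, a <= j < a + k -> P j) ->
  k <= count P (iota s t).
Proof.
move=> sa akt Pak.
rewrite (_ : t = (a - s) + (k + (s + t - (a + k)))); last by lia.
have count_ak : count P (iota a k) = k.
  rewrite -[RHS](size_iota a k) -count_predT.
  by apply: eq_in_count => j; rewrite mem_iota => /Pak.
by rewrite !iotaD !count_cat subnKC // count_ak addnCA leq_addr.
Qed.

Lemma leq_count_iota2 (P : pred nat) n a k b l :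
  a + k <= b -> b + l <= n ->
  (forall j, a <= j < a + k -> P j) -> (forall j, b <= j < b + l -> P j) ->
  k + l <= count P (iota 0 n).
Proof.
move=> akb bln Pak Pbl.
rewrite -(subnKC (leq_trans (leq_addr l b) bln)) iotaD count_cat add0n.
apply: leq_add; first by apply: (@leq_count_iota _ _ _ a) => //; lia.
by apply: (@leq_count_iota _ _ _ b) => //; lia.
Qed.

Lemma card_ord_count n (A : {pred 'I_n}) (P : pred nat) :
  (forall j : 'I_n, (j \in A) = P j) -> #|A| = count P (iota 0 n).
Proof.
move=> AP; rewrite -val_enum_ord count_map cardE size_filter enumT.
exact: eq_count.
Qed.

Lemma card_sum_set (T1 T2 : finType) (A : {set T1 + T2}) :
  #|A| = #|[set x | inl x \in A]| + #|[set y | inr y \in A]|.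
Proof.
by rewrite -!sum1_card big_sumType; congr (_ + _); apply: eq_bigl => x; rewrite inE.
Qed.

Lemma uniq_cycle_peak (T : finType) (e : rel T) (r : T -> nat) (c : seq T) :
  uniq c -> 2 < size c -> cycle e c ->
  exists v u w, [/\ {subset [:: v; u; w] <= c}, u != w, e v u, e w v
                  & maxn (r u) (r w) <= r v].
Proof.
move=> uq sz cyc.
have [v vc vmax] : exists2 v, v \in c & forall x, x \in c -> r x <= r v.
  case: c sz {uq cyc} => [//|x0 c] _.
  by case: (@arg_maxnP _ x0 (mem (x0 :: c)) r (mem_head x0 c)) => v; exists v.
have [i c' def_c'] := rot_to vc.
have mem_c' x : x \in v :: c' -> x \in c by rewrite -def_c' mem_rot.
rewrite -(rot_uniq i) -(rot_cycle i) -(size_rot i) def_c' in uq cyc sz.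
case: c' mem_c' uq cyc sz {def_c'} => [|u q] // mem_c'.
case/lastP: q mem_c' => [|q w] mem_c' //= /and3P[_ uq' _].
move=> /andP[evu]; rewrite rcons_path last_rcons => /andP[_ ewv] _.
have sub : {subset [:: v; u; w] <= c}.
  move=> x; rewrite !inE => /or3P[] /eqP->; apply: mem_c';
  by rewrite !inE ?mem_rcons ?inE eqxx ?orbT.
exists v, u, w; split => //.
- by apply: contraNneq uq' => ->; rewrite mem_rcons mem_head.
- by rewrite geq_max !vmax ?sub // !inE eqxx ?orbT.
Qed.

Definition bip_rel n (adj : nat -> nat -> bool) : rel (bvert n) :=
  fun x y => match x, y with
             | inl i, inr j | inr j, inl i => adj i j
             | _, _ => false
             end.
Arguments bip_rel : clear implicits.

Definition bip_set n (P Q : pred nat) : {set bvert n} :=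
  [set v : bvert n | match v with inl i => P i | inr j => Q j end].
Arguments bip_set : clear implicits.

Lemma bip_rel_bip_graph n adj : bip_graph (bip_rel n adj).
Proof.
split; first by case=> [i|j] [k|l].
split; first by case.
by case=> [i|j] [k|l].
Qed.

Lemma deg_bip_rel_inl n adj (i : 'I_n) :
  deg (bip_rel n adj) (inl i) = count (adj i) (iota 0 n).
Proof.
rewrite /deg card_sum_set (@card_ord_count _ _ pred0) ?count_pred0 ?add0n => [|j].
  by apply: card_ord_count => j; rewrite !inE.
by rewrite !inE.
Qed.

Lemma deg_bip_rel_inr n adj (j : 'I_n) :
  deg (bip_rel n adj) (inr j) = count (adj^~ j) (iota 0 n).
Proof.
rewrite /deg card_sum_set [X in _ + X](@card_ord_count _ _ pred0) ?count_pred0 ?addn0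
  => [|i].
  by apply: card_ord_count => i; rewrite !inE.
by rewrite !inE.
Qed.

Lemma card_bip_set n P Q :
  #|bip_set n P Q| = count P (iota 0 n) + count Q (iota 0 n).
Proof.
by rewrite card_sum_set; congr (_ + _); apply: card_ord_count => i; rewrite !inE.
Qed.

Lemma card_bip_setI_part n P Q :
  #|bip_set n P Q :&: part n true| = count P (iota 0 n).
Proof.
rewrite card_sum_set [X in _ + X](@card_ord_count _ _ pred0) ?count_pred0 ?addn0 => [|i].
  by apply: card_ord_count => i; rewrite !inE andbT.
by rewrite !inE andbF.
Qed.

Lemma bip_set_forest n (adj : nat -> nat -> bool) (P Q : pred nat) (rl rr : nat -> nat) :
  (forall i j j', P i -> Q j -> Q j' -> adj i j -> adj i j' ->
     rr j <= rl i -> rr j' <= rl i -> j = j') ->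
  (forall j i i', Q j -> P i -> P i' -> adj i j -> adj i' j ->
     rl i <= rr j -> rl i' <= rr j -> i = i') ->
  induced_forest (bip_rel n adj) (bip_set n P Q).
Proof.
move=> left_peak right_peak [c [uq sz inS cyc]].
pose r (v : bvert n) := match v with inl i => rl i | inr j => rr j end.
have [v [u [w [sub_c uw evu ewv le]]]] := uniq_cycle_peak r uq sz cyc.
have /and3P[Sv Su Sw] :
    [&& v \in bip_set n P Q, u \in bip_set n P Q & w \in bip_set n P Q].
  by apply/and3P; split; apply: (allP inS); apply: sub_c; rewrite !inE eqxx ?orbT.
case/negP: uw; move: le; rewrite geq_max.
case: v u w {sub_c} evu ewv Sv Su Sw => [i|j] [i1|j1] [i2|j2] //=;
  rewrite !inE /= => evu ewv Sv Su Sw /andP[le1 le2]; apply/eqP; f_equal;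
  apply: val_inj;
  [exact: left_peak evu ewv le1 le2 | exact: right_peak evu ewv le1 le2].
Qed.

Definition dense_forest_bigraph (c : lam_choice) (n : nat) : Prop :=
  exists e : rel (bvert n),
    [/\ bip_graph e,
        (forall v : bvert n, 4 * deg e v >= 2 * n + 4) &
        exists S : {set bvert n},
          [/\ #|S| = n + 1,
              induced_forest e S &
              exists i : bool, lam_ok c (2 * n) #|S :&: part n i| ]].

Lemma dense_forest_bigraph_of_adj c n adj (P Q : pred nat) :
  (forall i, i < n -> 2 * n + 4 <= 4 * count (adj i) (iota 0 n)) ->
  (forall j, j < n -> 2 * n + 4 <= 4 * count (adj^~ j) (iota 0 n)) ->
  count P (iota 0 n) + count Q (iota 0 n) = n + 1 ->
  lam_ok c (2 * n) (count P (iota 0 n)) ->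
  induced_forest (bip_rel n adj) (bip_set n P Q) ->
  dense_forest_bigraph c n.
Proof.
move=> degl degr cardS lamS forS; exists (bip_rel n adj); split.
- exact: bip_rel_bip_graph.
- by case=> [i|j]; rewrite ?deg_bip_rel_inl ?deg_bip_rel_inr ?degl ?degr.
- exists (bip_set n P Q); split => //; first by rewrite card_bip_set.
  by exists true; rewrite card_bip_setI_part.
Qed.

Lemma complete_bigraph_witness n : 1 < n -> dense_forest_bigraph Lam1 n.
Proof.
move=> n_gt1.
apply: (@dense_forest_bigraph_of_adj _ _ (fun _ _ => true) (fun i => i < 1) predT).
- by move=> i _; rewrite count_predT size_iota; lia.
- by move=> j _; rewrite count_predT size_iota; lia.
- by rewrite count_iota_lt 1?ltnW // count_predT size_iota addnC.
- by rewrite count_iota_lt 1?ltnW.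
apply: (@bip_set_forest _ _ _ _ (fun _ => 0) (fun _ => 1)) => //; lia.
Qed.

(* Two hubs 0 and 1 of V_1 with neighbourhoods [0, m] and [m-1, 2m), which
   meet outside m only at m - 1; every other vertex of V_1 is complete to
   V_2. S is the two hubs together with V_2 minus m. *)
Definition hub_adj (m i j : nat) : bool :=
  (i == 0) && (j <= m) || (i == 1) && (m <= j.+1) || (1 < i).

Lemma hub_bigraph_witness m : 2 < m -> dense_forest_bigraph Lam2 (2 * m).
Proof.
move=> m_gt2.
apply: (@dense_forest_bigraph_of_adj _ _ (hub_adj m) (fun i => i < 2) (fun j => j != m)).
- move=> i _; suff: m.+1 <= count (hub_adj m i) (iota 0 (2 * m)) by lia.
  have [->|i_neq1] := eqVneq i 1.
    by apply: (@leq_count_iota _ _ _ m.-1) => [||j]; rewrite /hub_adj; lia.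
  by apply: (@leq_count_iota _ _ _ 0) => [||j]; rewrite /hub_adj; lia.
- move=> j _; suff: m.+1 <= count ((hub_adj m)^~ j) (iota 0 (2 * m)) by lia.
  by apply: (@leq_count_iota _ _ _ 2) => [||i]; rewrite /hub_adj; lia.
- by rewrite count_iota_lt ?count_iota_neq; lia.
- by rewrite count_iota_lt //; lia.
apply: (@bip_set_forest _ _ _ _ (fun i => 2 * i) (fun j => 1 + 2 * (m <= j)));
  rewrite /hub_adj; lia.
Qed.

(* S = {0..m-1} in V_1 and {0..m} in V_2 induces the path
   inr 0, inl 0, inr 1, inl 1, ..., inl (m-1), inr m; every pair with an
   endpoint outside S is an edge. *)
Definition zigzag_adj (m i j : nat) : bool :=
  (m <= i) || (m < j) || (j == i) || (j == i.+1).

Lemma zigzag_bigraph_witness m : 0 < m -> dense_forest_bigraph LamQuarter (2 * m).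
Proof.
move=> m_gt0.
apply: (@dense_forest_bigraph_of_adj _ _ (zigzag_adj m) (fun i => i < m)
                                        (fun j => j < m.+1)).
- move=> i _; suff: m.+1 <= count (zigzag_adj m i) (iota 0 (2 * m)) by lia.
  have [i_lt_m|i_ge_m] := ltnP i m.
    rewrite (_ : m.+1 = 2 + m.-1); last by lia.
    by apply: (@leq_count_iota2 _ _ i _ m.+1) => [||j|j]; rewrite /zigzag_adj; lia.
  by apply: (@leq_count_iota _ _ _ 0) => [||j]; rewrite /zigzag_adj; lia.
- move=> j _; suff: m.+1 <= count ((zigzag_adj m)^~ j) (iota 0 (2 * m)) by lia.
  have [j_lt_m|j_ge_m] := ltnP j m.
    rewrite -add1n.
    by apply: (@leq_count_iota2 _ _ j _ m) => [||i|i]; rewrite /zigzag_adj; lia.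
  by apply: (@leq_count_iota _ _ _ m.-1) => [||i]; rewrite /zigzag_adj; lia.
- by rewrite !count_iota_lt; lia.
- by rewrite /= count_iota_lt; lia.
apply: (@bip_set_forest _ _ _ _ (fun i => i.*2.+1) (fun j => j.*2));
  rewrite /zigzag_adj; lia.
Qed.

Theorem theorem2p6 :
  forall (c : lam_choice) (N0 : nat),
    exists n : nat, N0 <= n /\
    exists e : rel (bvert n),
      [/\ bip_graph e,
          (forall v : bvert n, 4 * deg e v >= 2 * n + 4) &
          exists S : {set bvert n},
            [/\ #|S| = n + 1,
                induced_forest e S &
                exists i : bool, lam_ok c (2 * n) #|S :&: part n i| ]].
Proof.
move=> c N0; case: c.
- by exists N0.+2; split; [lia | apply: complete_bigraph_witness].
- by exists (2 * (N0 + 3)); split; [lia | apply: hub_bigraph_witness; lia].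
- by exists (2 * N0.+1); split; [lia | apply: zigzag_bigraph_witness].
Qed.
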